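(* Assume $(q+1)/d=3$, let $r$ be an integer, $a,b\in\mathbb F_{q^2}^*$, $0\le j_1,j_2<d$, and put $h(X)=1+aX^{1+3j_1}+bX^{2+3j_2}$ and $L_k(X)=1+a\epsilon^{j_1k}X+b\epsilon^{j_2k}X^2$ for $0\le k<d$. Suppose that for every $0\le k<d$ there exist $\tau_k\in\{0,1,2\}$ and $\lambda_k\in\mu_{q+1}$ with $L_k\in\mathcal L_k(2,\tau_k;\lambda_k)$, and that $\gcd(e_k,3)=1$ where $e_k=r-2+\tau_k$. Define $\pi(k)\in\mathbb Z/d\mathbb Z$ by $\lambda_k^3=\epsilon^{\pi(k)}$, and $K_1=\{k:\tau_k=2\}$, $K_2=\{k:\tau_k=1\}$. If $K_1\neq\emptyset$ and $K_2\ne\emptyset$, then $r\equiv-1\pmod3$, $d$ is even, $K_1$ and $K_2$ are the two cosets of $2\mathbb Z/d\mathbb Z$ in $\mathbb Z/d\mathbb Z$, $b^3=-1$, $a=\pm b^{-1}$, $j_1+j_2+1\equiv d/2\pmod d$, $2j_2-j_1+1\equiv d/2\pmod d$, and $\pi(k)+e_kk=rk$ in $\mathbb Z/d\mathbb Z$ for all $k$. Moreover, either $q\equiv5\pmod{18}$ and $h(X)=1+aX^{(q+1)/6}+bX^{(q+1)/3}$, or $q\equiv11\pmod{18}$ and $h(X)=1+aX^{5(q+1)/6}+bX^{2(q+1)/3}$.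
   Context: $q$ is a prime power, $d$ is a positive divisor of $q+1$, and $\epsilon\in\mathbb F_{q^2}^*$ has multiplicative order $d$. $\mu_{q+1}$ is the subgroup of order $q+1$ of $\mathbb F_{q^2}^*$. For $a\in\mathbb F_{q^2}$, $\bar a=a^q$; for $f(X)=\sum_{i=0}^n a_iX^i\in\mathbb F_{q^2}[X]$ with $a_n\neq0$, $\tilde f(X)=\sum_{i=0}^n\bar a_iX^{n-i}$. For $0\le k<d$, $0\le t<(q+1)/d$ and $\lambda\in\mu_{q+1}$: $\mathcal L_k(t,0;\lambda)$ is the set of $L\in\mathbb F_{q^2}[X]$ with $\deg L=t$, $\tilde L=\lambda L$ and $\gcd(L,X^{(q+1)/d}-\epsilon^k)=1$; for an integer $\tau$ with $(q+1)/d-t\le\tau\le t$, $\mathcal L_k(t,\tau;\lambda)$ is the set of $L=P+X^{(q+1)/d-\tau}Q$ with $P,Q\in\mathbb F_{q^2}[X]$, $\deg P=t-\tau$, $\tilde P=\lambda P$, $\deg Q=\tau+t-(q+1)/d$, $\tilde Q=\lambda\epsilon^kQ$, and $\gcd(L,X^{(q+1)/d}-\epsilon^k)=1$. *)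

From HB Require Import structures.
From mathcomp Require Import all_boot all_order all_algebra all_field.
Set Implicit Arguments. Unset Strict Implicit. Unset Printing Implicit Defensive.
Import Order.TTheory GRing.Theory Num.Theory.
Local Open Scope ring_scope.

(* Conjugation a |-> a^q on F_{q^2} and the "conjugate reciprocal"
   f~(X) = sum_i conj(a_i) X^(n-i) for f = sum_{i<=n} a_i X^i, deg f = n. *)
Definition tildep (F : fieldType) (q : nat) (f : {poly F}) : {poly F} :=
  \poly_(i < size f) ((f`_((size f).-1 - i)) ^+ q).

(* Lset q m eps k t tau lam L  ==  L \in \mathcal L_k(t, tau; lam),
   where m = (q+1)/d.  Degrees: deg P = n is encoded as size P = n.+1. *)
Definition Lset (F : fieldType) (q m : nat) (eps : F) (k t tau : nat)
    (lam : F) (L : {poly F}) : Prop :=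
  if tau == 0%N then
    [/\ size L = t.+1, tildep q L = lam *: L &
        coprimep L ('X^m - (eps ^+ k)%:P)]
  else
    [/\ (m - t <= tau <= t)%N,
        exists P Q : {poly F},
          [/\ L = P + 'X^(m - tau) * Q,
              size P = (t - tau).+1, tildep q P = lam *: P,
              size Q = (tau + t - m).+1 &
              tildep q Q = (lam * eps ^+ k) *: Q] &
        coprimep L ('X^m - (eps ^+ k)%:P)].

From HB Require Import structures.
From mathcomp Require Import all_boot all_order all_algebra all_field.
From mathcomp Require Import ring zify.
Set Implicit Arguments. Unset Strict Implicit. Unset Printing Implicit Defensive.
Import Order.TTheory GRing.Theory Num.Theory.
Local Open Scope ring_scope.

(* Write L_k = 1 + A_k X + B_k X^2.  Comparing coefficients of L~ and lam L,
   tau_k = 2 forces lam_k = 1 and A_k B_k eps^k = 1, while tau_k = 1 forces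
   lam_k A_k = 1 and A_k = eps^k B_k^2 (once a and b are known to have norm 1,
   which one index of each kind provides); both at once would make L_k divide
   X^3 - eps^k.  The condition on e_k excludes tau_k = 0, so for every k exactly
   one of  (ab) s^k = 1  and  (a/b^2) t^k = 1  holds, where s = eps^(j1+j2+1)
   and t = eps^(j1-2j2-1), and both cases occur.  Such an alternation forces
   s = t = -1, whence d is even, eps^(d/2) = -1, the congruences on j1 and j2,
   the values ab = (-1)^k1 and a/b^2 = (-1)^k2, and the exponents of h. *)

Lemma coprimez3E (x : int) : coprimez x 3 = ~~ (3 %| x)%Z.
Proof. by rewrite coprimez_sym coprimezE (prime_coprime _ (isT : prime 3)) dvdzE. Qed.

Lemma coprimez3_mod (r : int) :
  coprimez r 3 -> coprimez (r - 1) 3 -> (r = -1 %[mod 3])%Z.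
Proof. rewrite !coprimez3E !dvdzE; lia. Qed.

Lemma modz_sub_half (d m x y : nat) : d = (m * 2)%N ->
  (x = m + y %[mod d])%N -> (y%:Z - x%:Z = m%:Z %[mod d%:Z])%Z.
Proof.
move=> dm xy; apply/eqP; rewrite eqz_mod_dvd.
have : (d%:Z %| x%:Z - (m + y)%N%:Z)%Z by rewrite -eqz_mod_dvd !modz_nat xy.
have -> : y%:Z - x%:Z - m%:Z = - (x%:Z - (m + y)%N%:Z) - d%:Z by rewrite dm; lia.
by move=> dv; rewrite rpredB ?rpredN ?dvdzz.
Qed.

Lemma exponents_mod18 (q d j1 j2 : nat) : q.+1 = (3 * d)%N -> ~~ odd d ->
  (j1 < d)%N -> (j2 < d)%N ->
  (j1 + j2 + 1 = d %/ 2 %[mod d])%N -> (j1 = d %/ 2 + (2 * j2 + 1) %[mod d])%N ->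
  (q %% 18 = 5 /\ 1 + 3 * j1 = q.+1 %/ 6 /\ 2 + 3 * j2 = q.+1 %/ 3)%N \/
  (q %% 18 = 11 /\ 1 + 3 * j1 = 5 * q.+1 %/ 6 /\ 2 + 3 * j2 = 2 * q.+1 %/ 3)%N.
Proof.
move=> q3d d_even j1d j2d c1 c2.
have dm : d = (d %/ 2 * 2)%N by rewrite divnK // dvdn2.
have md : (d %/ 2 < d)%N by lia.
have E1 : (j1 + j2 + 1 = (j1 + j2 + 1) %/ d * d + d %/ 2)%N.
  by rewrite {1}(divn_eq (j1 + j2 + 1) d) c1 modn_small.
have E2 : (d %/ 2 + (2 * j2 + 1) = (d %/ 2 + (2 * j2 + 1)) %/ d * d + j1)%N.
  by rewrite {1}(divn_eq (d %/ 2 + (2 * j2 + 1)) d) -c2 modn_small.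
have : ((j1 + j2 + 1) %/ d < 2)%N by rewrite ltn_divLR; lia.
have : ((d %/ 2 + (2 * j2 + 1)) %/ d < 3)%N by rewrite ltn_divLR; lia.
move: E1 E2; set n1 := (_ %/ d)%N; set n2 := (_ %/ d)%N.
clearbody n1 n2; clear c1 c2; move: (d %/ 2)%N dm md => m dm md.
case: n1 => [|[|n1]] E1 //; case: n2 => [|[|[|n2]]] E2 // _ _; lia.
Qed.

Section FieldLemmas.
Variable F : fieldType.

Lemma sign_eq1 n : (-1 : F) != 1 -> ((-1) ^+ n == 1 :> F) = ~~ odd n.
Proof.
by move=> m1; rewrite -signr_odd; case: (odd n); rewrite ?expr1 ?(negbTE m1) ?expr0 ?eqxx.
Qed.

Lemma divf_eq1 (x y : F) : y != 0 -> (x / y == 1) = (x == y).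
Proof. by move=> y0; apply/eqP/eqP => [/divr1_eq | ->]; rewrite ?divff. Qed.

Lemma mul_sign_eq1 (x : F) n : x * (-1) ^+ n = 1 -> x = (-1) ^+ n.
Proof.
have sn0 : (-1) ^+ n != 0 :> F by rewrite expf_neq0 ?oppr_eq0 ?oner_eq0.
by move=> xn; rewrite -[x](mulfK sn0) xn mul1r invr_sign.
Qed.

End FieldLemmas.

Section PeriodicExclusion.
Variables (F : fieldType) (d : nat) (al be s t : F).
Hypotheses (d_gt0 : (0 < d)%N) (s_d : s ^+ d = 1) (t_d : t ^+ d = 1).
Hypothesis xor_lt : forall k, (k < d)%N -> (al * s ^+ k == 1) != (be * t ^+ k == 1).

Lemma periodic_xor k : (al * s ^+ k == 1) != (be * t ^+ k == 1).
Proof. by rewrite -(expr_mod k s_d) -(expr_mod k t_d) xor_lt ?ltn_pmod. Qed.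

Lemma xor_base_neq1 k1 k2 : al * s ^+ k1 = 1 -> be * t ^+ k2 = 1 -> s != 1.
Proof.
move=> X1 Y2; apply/eqP=> s1; have := periodic_xor k2.
by move: X1; rewrite s1 !expr1n Y2 => ->; rewrite !eqxx.
Qed.

Lemma xor_base_sign k1 : al * s ^+ k1 = 1 -> s != 1 -> t != 1 -> s = -1.
Proof.
move=> X1 s1 t1.
have shift n : al * s ^+ (k1 + n) = s ^+ n by rewrite exprD mulrA X1 mul1r.
have Y1 : be * t ^+ k1.+1 = 1.
  apply/eqP; have := periodic_xor (k1 + 1).
  by rewrite shift expr1 (negbTE s1) addn1; case: (_ == 1).
have Y2 : (be * t ^+ (k1 + 2) == 1) = false.
  by rewrite addn2 exprS mulrCA Y1 mulr1 (negbTE t1).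
have s2 : s ^+ 2 == 1.
  by have := periodic_xor (k1 + 2); rewrite shift Y2; case: (s ^+ 2 == 1).
by move: s2; rewrite sqrf_eq1 (negbTE s1) => /eqP.
Qed.

End PeriodicExclusion.

Lemma periodic_xor_sign (F : fieldType) (d : nat) (al be s t : F) (k1 k2 : nat) :
  (0 < d)%N -> s ^+ d = 1 -> t ^+ d = 1 ->
  (forall k, (k < d)%N -> (al * s ^+ k == 1) != (be * t ^+ k == 1)) ->
  al * s ^+ k1 = 1 -> be * t ^+ k2 = 1 -> [/\ s = -1, t = -1 & (-1 : F) != 1].
Proof.
move=> d_gt0 s_d t_d xor X1 Y2.
have rox k : (k < d)%N -> (be * t ^+ k == 1) != (al * s ^+ k == 1).
  by move=> kd; rewrite eq_sym xor.
have s1 := xor_base_neq1 d_gt0 s_d t_d xor X1 Y2.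
have t1 := xor_base_neq1 d_gt0 t_d s_d rox Y2 X1.
have sm := xor_base_sign d_gt0 s_d t_d xor X1 s1 t1.
by split=> //; [apply: (xor_base_sign d_gt0 t_d s_d rox Y2) | rewrite -sm].
Qed.

Section QuadraticLset.
Variable F : fieldType.
Implicit Types (A B c e lam : F) (q k : nat).

Local Notation quad A B := (1 + A *: 'X + B *: 'X^2 : {poly F}).

Lemma coef_quad A B i : (quad A B)`_i =
  if i == 0%N then 1 else if i == 1%N then A else if i == 2%N then B else 0.
Proof.
rewrite !coefD coef1 !coefZ coefX coefXn.
by case: i => [|[|[|i]]] /=; rewrite ?mulr1 ?mulr0 ?addr0 ?add0r.
Qed.

Lemma coef_tildep q (f : {poly F}) i : (i < size f)%N ->
  (tildep q f)`_i = f`_((size f).-1 - i) ^+ q.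
Proof. by rewrite /tildep coef_poly => ->. Qed.

Lemma Lset_quad_tau1 q k A B e lam :
  Lset q 3 e k 2 1 lam (quad A B) ->
  [/\ A ^+ q = lam, lam * A = 1 & B ^+ q = lam * e ^+ k * B].
Proof.
rewrite /Lset /= => -[_ [P [Q [EL sP tP sQ tQ]]] _].
have cL i : (quad A B)`_i = P`_i + ('X^2 * Q)`_i by rewrite EL coefD.
have P0 : P`_0 = 1 by move: (cL 0%N); rewrite coef_quad coefXnM /= addr0.
have P1 : P`_1 = A by move: (cL 1%N); rewrite coef_quad coefXnM /= addr0.
have Q0 : Q`_0 = B.
  by move: (cL 2%N); rewrite coef_quad coefXnM /= nth_default ?sP // add0r.
have tP0 := @coef_tildep q P 0; have tP1 := @coef_tildep q P 1.
have tQ0 := @coef_tildep q Q 0; rewrite sP /= in tP0 tP1; rewrite sQ /= in tQ0.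
split.
- by rewrite -P1 -tP0 // tP coefZ P0 mulr1.
- by rewrite -P1 -[_ * _]coefZ -tP tP1 // P0 expr1n.
- by rewrite -Q0 -tQ0 // tQ coefZ.
Qed.

Lemma Lset_quad_tau2 q k A B e lam :
  Lset q 3 e k 2 2 lam (quad A B) ->
  [/\ lam = 1, B ^+ q = lam * e ^+ k * A & A ^+ q = lam * e ^+ k * B].
Proof.
rewrite /Lset /= => -[_ [P [Q [EL sP tP sQ tQ]]] _].
have cL i : (quad A B)`_i = P`_i + ('X^1 * Q)`_i by rewrite EL coefD.
have P0 : P`_0 = 1 by move: (cL 0%N); rewrite coef_quad coefXnM /= addr0.
have Q0 : Q`_0 = A.
  by move: (cL 1%N); rewrite coef_quad coefXnM /= nth_default ?sP // add0r.
have Q1 : Q`_1 = B.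
  by move: (cL 2%N); rewrite coef_quad coefXnM /= nth_default ?sP // add0r.
have tP0 := @coef_tildep q P 0; rewrite sP /= in tP0.
have tQ0 := @coef_tildep q Q 0; have tQ1 := @coef_tildep q Q 1.
rewrite sQ /= in tQ0 tQ1.
have lam1 : lam = 1 by move: (tP0 isT); rewrite tP coefZ P0 expr1n mulr1.
split=> //.
- by rewrite -Q1 -tQ0 // tQ coefZ Q0.
- by rewrite -Q0 -tQ1 // tQ coefZ Q1.
Qed.

Lemma Lset_coprime q m e k t tau lam (L : {poly F}) :
  Lset q m e k t tau lam L -> coprimep L ('X^m - (e ^+ k)%:P).
Proof. by rewrite /Lset; case: (tau == 0%N) => -[]. Qed.

Lemma quad_square_not_coprime A c : A != 0 -> A ^+ 3 * c = 1 ->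
  ~~ coprimep (quad A (A ^+ 2)) ('X^3 - c%:P).
Proof.
move=> A0 Ac; apply/negP => cop.
have E : A ^+ 3 *: ('X^3 - c%:P) = (A *: 'X - 1) * quad A (A ^+ 2).
  by rewrite scalerBr scale_polyC Ac -!mul_polyC (rmorphXn polyC); ring.
have dv : quad A (A ^+ 2) %| 'X^3 - c%:P.
  by rewrite -(dvdpZr _ _ (expf_neq0 3 A0)) E dvdp_mull.
have := coprimep_dvdl dv cop; rewrite coprimep_def gcdpp => /eqP sL.
have : (quad A (A ^+ 2))`_2 = 0 by rewrite nth_default ?sL.
by rewrite coef_quad; apply/eqP; rewrite expf_neq0.
Qed.

End QuadraticLset.

Section CoefficientConditions.
Variables (F : fieldType) (q d : nat) (eps : F) (r : int) (a b : F) (j1 j2 : nat).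
Variables (tau : nat -> nat) (lam : nat -> F) (k1 k2 : nat).

Local Notation A k := (a * eps ^+ (j1 * k)).
Local Notation B k := (b * eps ^+ (j2 * k)).
Local Notation s := (eps ^+ (j1 + j2 + 1)).
Local Notation t := (eps ^+ j1 / eps ^+ (2 * j2 + 1)).

Hypotheses (d_dvd : (d %| q.+1)%N) (prim_eps : d.-primitive_root eps).
Hypotheses (a_neq0 : a != 0) (b_neq0 : b != 0).
Hypothesis L_spec : forall k : nat, (k < d)%N ->
  [/\ (tau k <= 2)%N, lam k ^+ q.+1 = 1,
      Lset q 3 eps k 2 (tau k) (lam k) (1 + A k *: 'X + B k *: 'X^2) &
      coprimez (r - 2 + (tau k)%:Z) 3].
Hypotheses (k1_lt : (k1 < d)%N) (tau_k1 : tau k1 = 2%N).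
Hypotheses (k2_lt : (k2 < d)%N) (tau_k2 : tau k2 = 1%N).

Lemma r_mod3 : (r = -1 %[mod 3])%Z.
Proof.
have [_ _ _ c1] := L_spec k1_lt; have [_ _ _ c2] := L_spec k2_lt.
rewrite tau_k1 in c1; rewrite tau_k2 in c2.
apply: coprimez3_mod.
  by rewrite (_ : r = r - 2 + 2%:Z) //; lia.
by rewrite (_ : r - 1 = r - 2 + 1%:Z) //; lia.
Qed.

Lemma tau_1_or_2 k : (k < d)%N -> tau k = 1%N \/ tau k = 2%N.
Proof.
move=> kd; have [le2 _ _ ck] := L_spec kd; have rm := r_mod3.
case: (tau k) le2 ck => [|[|[|//]]] _ ck; [|by left|by right].
by move: ck rm; rewrite coprimez3E dvdzE; lia.
Qed.

Lemma eps_neq0 n : eps ^+ n != 0.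
Proof.
apply/expf_neq0/eqP => e0; move: (prim_expr_order prim_eps).
by rewrite e0 expr0n gtn_eqF ?(prim_order_gt0 prim_eps) // => /eqP; rewrite eq_sym oner_eq0.
Qed.

Lemma A_neq0 k : A k != 0. Proof. exact: mulf_neq0 a_neq0 (eps_neq0 _). Qed.

Lemma B_neq0 k : B k != 0. Proof. exact: mulf_neq0 b_neq0 (eps_neq0 _). Qed.

Lemma norm_mul_eps (x : F) n : (x * eps ^+ n) ^+ q.+1 = x ^+ q.+1.
Proof.
have /eqP eps_q1 : eps ^+ q.+1 == 1 by rewrite -(prim_order_dvd prim_eps).
by rewrite exprMn exprAC eps_q1 expr1n mulr1.
Qed.

Lemma norm_a : a ^+ q.+1 = 1.
Proof.
have [_ _ L2 _] := L_spec k2_lt; rewrite tau_k2 in L2.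
have [Aq lamA _] := Lset_quad_tau1 L2.
by rewrite -(norm_mul_eps a (j1 * k2)) exprSr Aq.
Qed.

Lemma norm_b : b ^+ q.+1 = 1.
Proof.
have [_ _ L1 _] := L_spec k1_lt; rewrite tau_k1 in L1.
have [lam1 Bq Aq] := Lset_quad_tau2 L1.
rewrite -(norm_mul_eps b (j2 * k1)) -[RHS]norm_a -(norm_mul_eps a (j1 * k1)).
by rewrite !exprSr Bq Aq lam1; ring.
Qed.

Lemma tau2_spec k : (k < d)%N -> tau k = 2%N ->
  lam k = 1 /\ A k * B k * eps ^+ k = 1.
Proof.
move=> kd tk; have [_ _ Lk _] := L_spec kd; rewrite tk in Lk.
have [lam1 _ Aq] := Lset_quad_tau2 Lk; split=> //.
by rewrite -[RHS]norm_a -(norm_mul_eps a (j1 * k)) exprSr Aq lam1; ring.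
Qed.

Lemma tau1_spec k : (k < d)%N -> tau k = 1%N ->
  lam k * A k = 1 /\ A k = B k ^+ 2 * eps ^+ k.
Proof.
move=> kd tk; have [_ _ Lk _] := L_spec kd; rewrite tk in Lk.
have [_ lamA Bq] := Lset_quad_tau1 Lk; split=> //.
rewrite -[LHS]mulr1 -norm_b -(norm_mul_eps b (j2 * k)) exprSr Bq.
by rewrite -[RHS]mul1r -lamA; ring.
Qed.

Lemma not_tau1_tau2 k : (k < d)%N ->
  A k * B k * eps ^+ k = 1 -> A k = B k ^+ 2 * eps ^+ k -> False.
Proof.
move=> kd X Y; have [_ _ Lk _] := L_spec kd.
have BA : B k = A k ^+ 2 by rewrite expr2 {2}Y -[LHS]mul1r -X; ring.
have A3 : A k ^+ 3 * eps ^+ k = 1 by rewrite -X BA; ring.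
have := Lset_coprime Lk; rewrite BA; apply/negP.
exact: quad_square_not_coprime (A_neq0 k) A3.
Qed.

Lemma tau2_geometric k : A k * B k * eps ^+ k = a * b * s ^+ k.
Proof. by rewrite -exprM !mulnDl mul1n !exprD; ring. Qed.

Lemma tau1_geometric k :
  (A k == B k ^+ 2 * eps ^+ k) = (a / b ^+ 2 * t ^+ k == 1).
Proof.
have -> : a / b ^+ 2 * t ^+ k = A k / (B k ^+ 2 * eps ^+ k).
  rewrite !exprMn exprVn -!exprM (_ : (2 * j2 + 1) * k = j2 * k * 2 + k)%N; last by nia.
  by rewrite exprD; field; rewrite !eps_neq0 b_neq0.
by rewrite (divf_eq1 _ (mulf_neq0 (expf_neq0 2 (B_neq0 k)) (eps_neq0 k))).
Qed.

Lemma tau2E k : (k < d)%N -> (tau k == 2%N) = (a * b * s ^+ k == 1).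
Proof.
move=> kd; rewrite -tau2_geometric.
case: (tau_1_or_2 kd) => tk; rewrite tk /=.
- apply/esym/negbTE/eqP => X.
  by have [_ Y] := tau1_spec kd tk; apply: not_tau1_tau2 kd X Y.
- by have [_ ->] := tau2_spec kd tk; rewrite !eqxx.
Qed.

Lemma tau1E k : (k < d)%N -> (tau k == 1%N) = (a / b ^+ 2 * t ^+ k == 1).
Proof.
move=> kd; rewrite -tau1_geometric.
case: (tau_1_or_2 kd) => tk; rewrite tk /=.
- by have [_ <-] := tau1_spec kd tk; rewrite !eqxx.
- apply/esym/negbTE/eqP => Y.
  by have [_ X] := tau2_spec kd tk; apply: not_tau1_tau2 kd X Y.
Qed.

Lemma s_t_sign : [/\ s = -1, t = -1 & (-1 : F) != 1].
Proof.
apply: (periodic_xor_sign (al := a * b) (be := a / b ^+ 2) (k1 := k1) (k2 := k2)).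
- exact: prim_order_gt0 prim_eps.
- by rewrite exprAC (prim_expr_order prim_eps) ?expr1n.
- by rewrite exprMn exprVn !(exprAC eps _ d) (prim_expr_order prim_eps) // !expr1n invr1 mulr1.
- by move=> k kd; rewrite -(tau2E kd) -(tau1E kd); case: (tau_1_or_2 kd) => ->.
- by apply/eqP; rewrite -tau2E // tau_k1.
- by apply/eqP; rewrite -tau1E // tau_k2.
Qed.

Lemma d_even : ~~ odd d.
Proof.
have [s_m1 _ m1] := s_t_sign.
by rewrite -(sign_eq1 d m1) -s_m1 exprAC (prim_expr_order prim_eps) expr1n.
Qed.

Lemma eps_half : eps ^+ (d %/ 2) = -1.
Proof.
have dm : d = (d %/ 2 * 2)%N by rewrite divnK // dvdn2 d_even.
have half_gt0 : (0 < d %/ 2)%N by have := prim_order_gt0 prim_eps; lia.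
have n1 : eps ^+ (d %/ 2) != 1.
  by rewrite -(prim_order_dvd prim_eps); apply/negP => /(dvdn_leq half_gt0); lia.
have : (eps ^+ (d %/ 2)) ^+ 2 == 1 by rewrite -exprM -dm (prim_expr_order prim_eps).
by rewrite sqrf_eq1 (negbTE n1) => /eqP.
Qed.

Lemma j1j2_congr : (j1 + j2 + 1 = d %/ 2 %[mod d])%N.
Proof.
have [s_m1 _ _] := s_t_sign.
by apply/eqP; rewrite -(eq_prim_root_expr prim_eps) eps_half s_m1.
Qed.

Lemma j1_congr : (j1 = d %/ 2 + (2 * j2 + 1) %[mod d])%N.
Proof.
have [_ t_m1 _] := s_t_sign; apply/eqP.
by rewrite -(eq_prim_root_expr prim_eps) exprD eps_half -t_m1 divfK ?eps_neq0.
Qed.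

Lemma j1j2_congrz : (2 * j2%:Z - j1%:Z + 1 = (d %/ 2)%N%:Z %[mod d%:Z])%Z.
Proof.
rewrite (_ : 2 * j2%:Z - j1%:Z + 1 = (2 * j2 + 1)%N%:Z - j1%:Z); last by lia.
by apply: modz_sub_half j1_congr; rewrite divnK // dvdn2 d_even.
Qed.

Lemma ab_sign : a * b = (-1) ^+ k1.
Proof.
have [s_m1 _ _] := s_t_sign; apply: mul_sign_eq1.
by rewrite -s_m1; apply/eqP; rewrite -tau2E // tau_k1.
Qed.

Lemma ab2_sign : a / b ^+ 2 = (-1) ^+ k2.
Proof.
have [_ t_m1 _] := s_t_sign; apply: mul_sign_eq1.
by rewrite -t_m1; apply/eqP; rewrite -tau1E // tau_k2.
Qed.

Lemma tau2_parity k : (k < d)%N -> (tau k == 2%N) = (odd k == odd k1).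
Proof.
move=> kd; have [s_m1 _ m1] := s_t_sign.
by rewrite tau2E // s_m1 ab_sign -exprD sign_eq1 // oddD negb_add eq_sym.
Qed.

Lemma tau1_parity k : (k < d)%N -> (tau k == 1%N) = (odd k != odd k1).
Proof. by move=> kd; rewrite -tau2_parity //; case: (tau_1_or_2 kd) => ->. Qed.

Lemma b_cube : b ^+ 3 = -1.
Proof.
have par : odd k2 = ~~ odd k1.
  by move: (tau2_parity k2_lt); rewrite tau_k2; case: (odd k1); case: (odd k2).
have -> : b ^+ 3 = a * b / (a / b ^+ 2) by field; rewrite a_neq0 b_neq0.
by rewrite ab_sign ab2_sign invr_sign -exprD -signr_odd oddD par addbN addbb expr1.
Qed.

Lemma a_sign : a = b^-1 \/ a = - b^-1.
Proof.
rewrite -[a](mulfK b_neq0) ab_sign -signr_odd.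
by case: (odd k1); [right; rewrite expr1 mulN1r | left; rewrite expr0 mul1r].
Qed.

Lemma tau1_cube k : (k < d)%N -> tau k = 1%N -> A k ^+ 3 * eps ^+ k = 1.
Proof.
move=> kd tk; have [_ Y] := tau1_spec kd tk; have [s_m1 _ _] := s_t_sign.
have odd_sum : odd (k1 + k).
  by rewrite oddD -[_ (+) _]negbK negb_add eq_sym -tau2_parity // tk.
have ABm : A k * B k * eps ^+ k = -1.
  by rewrite tau2_geometric s_m1 ab_sign -exprD -signr_odd odd_sum expr1.
have sq1 : (A k * B k * eps ^+ k) ^+ 2 = 1 by rewrite ABm sqrrN expr1n.
transitivity (A k ^+ 2 * (B k ^+ 2 * eps ^+ k) * eps ^+ k); first by rewrite -Y; ring.
by rewrite -sq1; ring.
Qed.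

Lemma pi_congr k p : (k < d)%N -> lam k ^+ 3 = eps ^+ p ->
  (p%:Z + (r - 2 + (tau k)%:Z) * k%:Z = r * k%:Z %[mod d%:Z])%Z.
Proof.
move=> kd lp; apply/eqP; rewrite eqz_mod_dvd.
case: (tau_1_or_2 kd) => tk; rewrite tk.
- have [lamA _] := tau1_spec kd tk.
  have ep : eps ^+ p = eps ^+ k.
    by rewrite -lp -[lam k ^+ 3]mulr1 -(tau1_cube kd tk) mulrA -exprMn lamA expr1n mul1r.
  rewrite (_ : _ - _ = p%:Z - k%:Z); last by ring.
  by rewrite -eqz_mod_dvd !modz_nat eqz_nat -(eq_prim_root_expr prim_eps) ep.
- have [lam1 _] := tau2_spec kd tk.
  rewrite (_ : _ - _ = p%:Z); last by ring.
  by rewrite dvdzE /= (prim_order_dvd prim_eps) -lp lam1 expr1n.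
Qed.

End CoefficientConditions.

Theorem lemma4p10 (q : nat) (F : finFieldType) (d : nat) (eps : F)
    (r : int) (a b : F) (j1 j2 : nat) (tau : nat -> nat) (lam : nat -> F) :
  (exists p n : nat, [/\ prime p, (0 < n)%N & q = (p ^ n)%N]) ->
  #|F| = (q ^ 2)%N ->
  (d %| q.+1)%N ->
  (q.+1 %/ d = 3)%N ->
  d.-primitive_root eps ->
  a != 0 -> b != 0 ->
  (j1 < d)%N -> (j2 < d)%N ->
  (forall k : nat, (k < d)%N ->
     [/\ (tau k <= 2)%N,
         lam k ^+ q.+1 = 1,
         Lset q 3 eps k 2 (tau k) (lam k)
           (1 + (a * eps ^+ (j1 * k)) *: 'X + (b * eps ^+ (j2 * k)) *: 'X^2) &
         coprimez (r - 2 + (tau k)%:Z) 3]) ->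
  (exists2 k : nat, (k < d)%N & tau k = 2%N) ->
  (exists2 k : nat, (k < d)%N & tau k = 1%N) ->
  let h : {poly F} := 1 + a *: 'X^(1 + 3 * j1) + b *: 'X^(2 + 3 * j2) in
  [/\ (r = -1 %[mod 3])%Z,
      ~~ odd d,
      (exists c : bool, forall k : nat, (k < d)%N ->
        (tau k == 2%N) = (odd k == c) /\ (tau k == 1%N) = (odd k != c)),
      b ^+ 3 = -1 &
      (a = b^-1 \/ a = - b^-1)] /\
  [/\ (j1 + j2 + 1 = d %/ 2 %[mod d])%N,
      (2 * j2%:Z - j1%:Z + 1 = (d %/ 2)%N%:Z %[mod d%:Z])%Z,
      (forall k p : nat, (k < d)%N -> lam k ^+ 3 = eps ^+ p ->
         (p%:Z + (r - 2 + (tau k)%:Z) * k%:Z = r * k%:Z %[mod d%:Z])%Z) &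
      ((q %% 18 = 5)%N /\
         h = 1 + a *: 'X^(q.+1 %/ 6) + b *: 'X^(q.+1 %/ 3))
      \/ ((q %% 18 = 11)%N /\
         h = 1 + a *: 'X^(5 * q.+1 %/ 6) + b *: 'X^(2 * q.+1 %/ 3))].
Proof.
move=> _ _ dq qd pe a0 b0 j1d j2d HL [k1 k1d t1] [k2 k2d t2] h.
have d_even := d_even dq pe a0 b0 HL k1d t1 k2d t2.
have j1j2_congr := j1j2_congr dq pe a0 b0 HL k1d t1 k2d t2.
have j1_congr := j1_congr dq pe a0 b0 HL k1d t1 k2d t2.
have q3d : q.+1 = (3 * d)%N by rewrite -(divnK dq) qd mulnC.
split; split=> //.
- exact: r_mod3 dq pe a0 b0 HL k1d t1 k2d t2.
- exists (odd k1) => k kd; split.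
    exact: tau2_parity dq pe a0 b0 HL k1d t1 k2d t2 k kd.
  exact: tau1_parity dq pe a0 b0 HL k1d t1 k2d t2 k kd.
- exact: b_cube dq pe a0 b0 HL k1d t1 k2d t2.
- exact: a_sign dq pe a0 b0 HL k1d t1 k2d t2.
- exact: j1j2_congrz dq pe a0 b0 HL k1d t1 k2d t2.
- exact: pi_congr dq pe a0 b0 HL k1d t1 k2d t2.
have [[q5 [E1 E2]]|[q11 [E1 E2]]] := exponents_mod18 q3d d_even j1d j2d j1j2_congr j1_congr.
  by left; rewrite /h E1 E2.
by right; rewrite /h E1 E2.
Qed.
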